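(* Let $\mathbb{F}$ be a field of characteristic not $2$, $\alpha\in\mathbb{F}\setminus\{0,1\}$, and suppose $\mathbb{F}$ contains a root $\zeta$ of $x^2-(4\alpha-2)x+1$. In $\mathfrak{J}(\alpha)$ let $\mu=-\frac{1+\zeta}{4}$, $\nu=-\frac{1+\zeta^{-1}}{4}$, $\mathfrak{s}=\frac{1}{4(\alpha-1)}(\mu\mathfrak{a}+\mathfrak{a}\mathfrak{b}+\nu\mathfrak{b})$, $\mathfrak{t}=\frac{1}{\alpha(\alpha-1)}(\nu\mathfrak{a}+\mathfrak{a}\mathfrak{b}+\mu\mathfrak{b})$, $1_{\mathfrak{J}}=\frac{2}{\alpha-1}\sigma$, and $\rho=\tau_{\mathfrak{a}}\tau_{\mathfrak{b}}$. Then $\rho$ acts on $\mathbb{F}\mathfrak{s}$ as the scalar $\zeta^{-2}$, on $\mathbb{F}\mathfrak{t}$ as the scalar $\zeta^2$, and on $\mathbb{F}1_{\mathfrak{J}}$ as the identity.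
   Context: $\mathfrak{J}(\alpha)$ is the commutative algebra with basis $\mathfrak{a},\mathfrak{b},\sigma$ and product $\mathfrak{a}^2=\mathfrak{a}$, $\mathfrak{b}^2=\mathfrak{b}$, $\mathfrak{a}\mathfrak{b}=\frac12\mathfrak{a}+\frac12\mathfrak{b}+\sigma$, $\mathfrak{a}\sigma=\frac{\alpha-1}{2}\mathfrak{a}$, $\mathfrak{b}\sigma=\frac{\alpha-1}{2}\mathfrak{b}$, $\sigma^2=\frac{\alpha-1}{2}\sigma$; $1_{\mathfrak{J}}$ is its identity and $\mathfrak{a},\mathfrak{b}$ are primitive axes of Jordan type half in it. For an axis $x$ with eigenspaces $J_\lambda(x)=\{u:xu=\lambda u\}$, $\lambda\in\{1,0,\frac12\}$, the Miyamoto involution $\tau_x$ is the automorphism acting as identity on $J_1(x)\oplus J_0(x)$ and as $-1$ on $J_{1/2}(x)$. *)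

(* The algebra J(alpha) is modelled on 'rV[F]_3, with
   coordinates w.r.t. the basis (a, b, sigma). *)
From HB Require Import structures.
From mathcomp Require Import all_boot all_order all_algebra.
Set Implicit Arguments. Unset Strict Implicit. Unset Printing Implicit Defensive.
Import Order.TTheory GRing.Theory.
Local Open Scope ring_scope.

Section J.
Variable F : fieldType.

Definition mkJ (x y z : F) : 'rV[F]_3 := \row_(i < 3) [:: x; y; z]`_i.

Definition Ja : 'rV[F]_3 := mkJ 1 0 0.
Definition Jb : 'rV[F]_3 := mkJ 0 1 0.
Definition Jsigma : 'rV[F]_3 := mkJ 0 0 1.

(* The product of J(alpha), obtained by bilinear extension of
   a^2 = a, b^2 = b, ab = a/2 + b/2 + sigma, a sigma = (alpha-1)/2 a,
   b sigma = (alpha-1)/2 b, sigma^2 = (alpha-1)/2 sigma. *)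
Definition Jmul (alpha : F) (u v : 'rV[F]_3) : 'rV[F]_3 :=
  let c := (alpha - 1) / 2 in
  let u0 := u 0 0 in let u1 := u 0 1 in let u2 := u 0 2 in
  let v0 := v 0 0 in let v1 := v 0 1 in let v2 := v 0 2 in
  mkJ (u0 * v0 + (u0 * v1 + u1 * v0) / 2 + c * (u0 * v2 + u2 * v0))
      (u1 * v1 + (u0 * v1 + u1 * v0) / 2 + c * (u1 * v2 + u2 * v1))
      ((u0 * v1 + u1 * v0) + c * (u2 * v2)).

Definition in_eigenspace (alpha : F) (x : 'rV[F]_3) (lam : F) (u : 'rV[F]_3) :=
  Jmul alpha x u = lam *: u.

(* Since x is a primitive
   axis, J = J_1(x) + J_0(x) + J_{1/2}(x), so this determines tau uniquely. *)
Definition is_miyamoto (alpha : F) (x : 'rV[F]_3)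
    (tau : {linear 'rV[F]_3 -> 'rV[F]_3}) : Prop :=
  (forall u, in_eigenspace alpha x 1 u -> tau u = u) /\
  (forall u, in_eigenspace alpha x 0 u -> tau u = u) /\
  (forall u, in_eigenspace alpha x (2^-1) u -> tau u = - u).

End J.

From HB Require Import structures.
From mathcomp Require Import all_boot all_order all_algebra.
From mathcomp Require Import ring.
Set Implicit Arguments. Unset Strict Implicit. Unset Printing Implicit Defensive.
Import GRing.Theory.
Local Open Scope ring_scope.

(* In coordinates (x, y, z) w.r.t. (a, b, sigma), the vectors a,
   sigma - (alpha-1)/2 a and b + (1 - 2 alpha) a + 2 sigma are eigenvectors of
   ad_a for 1, 0 and 1/2, so tau_a (x, y, z) = (x + 2(2 alpha - 1) y, -y, z - 4y),
   and symmetrically for tau_b. As zeta is a root of a palindromic quadratic,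
   2(2 alpha - 1) = zeta + zeta^-1; rho thus has entries in zeta and zeta^-1,
   and the three eigenvector equations become rational identities in zeta. *)

Section Coordinates.
Variable F : fieldType.

Lemma scale_mkJ (k x y z : F) : k *: mkJ x y z = mkJ (k * x) (k * y) (k * z).
Proof. by apply/rowP => i; rewrite !mxE; case: i => [[|[|[|]]]]. Qed.

Lemma add_mkJ (x y z x' y' z' : F) :
  mkJ x y z + mkJ x' y' z' = mkJ (x + x') (y + y') (z + z').
Proof. by apply/rowP => i; rewrite !mxE; case: i => [[|[|[|]]]]. Qed.

Lemma Jmul_mkJ (alpha x y z x' y' z' : F) :
  Jmul alpha (mkJ x y z) (mkJ x' y' z') =
  mkJ (x * x' + (x * y' + y * x') / 2 + (alpha - 1) / 2 * (x * z' + z * x'))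
      (y * y' + (x * y' + y * x') / 2 + (alpha - 1) / 2 * (y * z' + z * y'))
      ((x * y' + y * x') + (alpha - 1) / 2 * (z * z')).
Proof. by rewrite /Jmul !mxE. Qed.

End Coordinates.

Lemma miyamoto_eigen_combination (F : fieldType) (alpha : F) x
    (tau : {linear 'rV[F]_3 -> 'rV[F]_3}) e1 e0 eh (p q r : F) :
  is_miyamoto alpha x tau ->
  in_eigenspace alpha x 1 e1 -> in_eigenspace alpha x 0 e0 ->
  in_eigenspace alpha x 2^-1 eh ->
  tau (p *: e1 + q *: e0 + r *: eh) = p *: e1 + q *: e0 + (- r) *: eh.
Proof.
move=> [fix1 [fix0 flip]] /fix1 tau_e1 /fix0 tau_e0 /flip tau_eh.
by rewrite !linearD !linearZ /= tau_e1 tau_e0 tau_eh scalerN scaleNr.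
Qed.

Section Axes.
Variables (F : fieldType) (alpha : F).
Hypothesis two_neq0 : (2 : F) != 0.

Lemma eigen1_Ja : in_eigenspace alpha (Ja F) 1 (Ja F).
Proof. by rewrite /in_eigenspace Jmul_mkJ scale_mkJ; congr mkJ; ring. Qed.

Lemma eigen0_Ja : in_eigenspace alpha (Ja F) 0 (mkJ (- ((alpha - 1) / 2)) 0 1).
Proof. by rewrite /in_eigenspace Jmul_mkJ scale_mkJ; congr mkJ; ring. Qed.

Lemma eigen_half_Ja : in_eigenspace alpha (Ja F) 2^-1 (mkJ (1 - 2 * alpha) 1 2).
Proof. by rewrite /in_eigenspace Jmul_mkJ scale_mkJ; congr mkJ; field. Qed.

Lemma eigen1_Jb : in_eigenspace alpha (Jb F) 1 (Jb F).
Proof. by rewrite /in_eigenspace Jmul_mkJ scale_mkJ; congr mkJ; ring. Qed.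

Lemma eigen0_Jb : in_eigenspace alpha (Jb F) 0 (mkJ 0 (- ((alpha - 1) / 2)) 1).
Proof. by rewrite /in_eigenspace Jmul_mkJ scale_mkJ; congr mkJ; ring. Qed.

Lemma eigen_half_Jb : in_eigenspace alpha (Jb F) 2^-1 (mkJ 1 (1 - 2 * alpha) 2).
Proof. by rewrite /in_eigenspace Jmul_mkJ scale_mkJ; congr mkJ; field. Qed.

Lemma miyamoto_Ja_mkJ (tau : {linear 'rV[F]_3 -> 'rV[F]_3}) : is_miyamoto alpha (Ja F) tau ->
  forall x y z, tau (mkJ x y z) = mkJ (x + 2 * (2 * alpha - 1) * y) (- y) (z - 4 * y).
Proof.
move=> tau_miya x y z.
have -> : mkJ x y z = (x + (alpha - 1) / 2 * (z - 2 * y) + (2 * alpha - 1) * y) *: Ja F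
    + (z - 2 * y) *: mkJ (- ((alpha - 1) / 2)) 0 1 + y *: mkJ (1 - 2 * alpha) 1 2.
  by rewrite /Ja !scale_mkJ !add_mkJ; congr mkJ; ring.
rewrite (miyamoto_eigen_combination _ _ _ tau_miya eigen1_Ja eigen0_Ja eigen_half_Ja).
by rewrite /Ja !scale_mkJ !add_mkJ; congr mkJ; ring.
Qed.

Lemma miyamoto_Jb_mkJ (tau : {linear 'rV[F]_3 -> 'rV[F]_3}) : is_miyamoto alpha (Jb F) tau ->
  forall x y z, tau (mkJ x y z) = mkJ (- x) (y + 2 * (2 * alpha - 1) * x) (z - 4 * x).
Proof.
move=> tau_miya x y z.
have -> : mkJ x y z = (y + (alpha - 1) / 2 * (z - 2 * x) + (2 * alpha - 1) * x) *: Jb F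
    + (z - 2 * x) *: mkJ 0 (- ((alpha - 1) / 2)) 1 + x *: mkJ 1 (1 - 2 * alpha) 2.
  by rewrite /Jb !scale_mkJ !add_mkJ; congr mkJ; ring.
rewrite (miyamoto_eigen_combination _ _ _ tau_miya eigen1_Jb eigen0_Jb eigen_half_Jb).
by rewrite /Jb !scale_mkJ !add_mkJ; congr mkJ; ring.
Qed.

Lemma miyamoto_comp_mkJ (tau_a tau_b : {linear 'rV[F]_3 -> 'rV[F]_3}) :
  is_miyamoto alpha (Ja F) tau_a -> is_miyamoto alpha (Jb F) tau_b ->
  forall x y z, tau_b (tau_a (mkJ x y z)) =
    mkJ (- x - 2 * (2 * alpha - 1) * y)
        (2 * (2 * alpha - 1) * x + ((2 * (2 * alpha - 1)) ^+ 2 - 1) * y)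
        (z - 4 * x - 4 * (1 + 2 * (2 * alpha - 1)) * y).
Proof.
move=> miya_a miya_b x y z.
by rewrite (miyamoto_Ja_mkJ miya_a) (miyamoto_Jb_mkJ miya_b); congr mkJ; ring.
Qed.

End Axes.

Lemma palindromic_root_neq0 (F : fieldType) (b z : F) :
  z ^+ 2 - b * z + 1 = 0 -> z != 0.
Proof.
move=> z_root; apply/eqP => z0; move: z_root.
by rewrite z0 expr0n mulr0 subr0 add0r => /eqP; rewrite oner_eq0.
Qed.

Lemma palindromic_root_sum (F : fieldType) (b z : F) :
  z ^+ 2 - b * z + 1 = 0 -> b = z + z^-1.
Proof.
move=> z_root; have z_neq0 := palindromic_root_neq0 z_root.
apply: (mulIf z_neq0); rewrite mulrDl mulVf //.
by apply/eqP; rewrite -subr_eq0 -oppr_eq0; apply/eqP; rewrite -z_root; ring.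
Qed.

Theorem corollary3p10 (F : fieldType) (alpha zeta : F)
  (tau_a tau_b : {linear 'rV[F]_3 -> 'rV[F]_3}) :
  (2 : F) != 0 ->
  alpha != 0 -> alpha != 1 ->
  zeta ^+ 2 - (4 * alpha - 2) * zeta + 1 = 0 ->
  is_miyamoto alpha (Ja F) tau_a ->
  is_miyamoto alpha (Jb F) tau_b ->
  let mu := - (1 + zeta) / 4 in
  let nu := - (1 + zeta^-1) / 4 in
  let ab := Jmul alpha (Ja F) (Jb F) in
  let s := (4 * (alpha - 1))^-1 *: (mu *: Ja F + ab + nu *: Jb F) in
  let t := (alpha * (alpha - 1))^-1 *: (nu *: Ja F + ab + mu *: Jb F) in
  let one := (2 / (alpha - 1)) *: Jsigma F in
  let rho := fun u => tau_b (tau_a u) in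
  (forall k : F, rho (k *: s) = zeta ^- 2 *: (k *: s)) /\
  (forall k : F, rho (k *: t) = zeta ^+ 2 *: (k *: t)) /\
  (forall k : F, rho (k *: one) = k *: one).
Proof.
move=> two_neq0 _ _ zeta_root miya_a miya_b mu nu ab s t one rho.
have zeta_neq0 := palindromic_root_neq0 zeta_root.
have four_neq0 : (4 : F) != 0.
  have -> : (4 : F) = 2 * 2 by ring.
  by rewrite mulf_neq0.
have w_eq : 2 * (2 * alpha - 1) = zeta + zeta^-1.
  by rewrite -(palindromic_root_sum zeta_root); ring.
have rho_mkJ := miyamoto_comp_mkJ two_neq0 miya_a miya_b.
rewrite w_eq in rho_mkJ.
have eigen_scaled v lam : rho v = lam *: v -> forall k, rho (k *: v) = lam *: (k *: v).
  by rewrite /rho /= => rho_v k; rewrite !linearZ /= rho_v !scalerA mulrC.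
have ab_eq : ab = mkJ (1 / 2) (1 / 2) 1.
  by rewrite /ab Jmul_mkJ; congr mkJ; field.
split; [|split].
- apply: (eigen_scaled); rewrite /s; apply: (eigen_scaled).
  rewrite ab_eq /mu /nu /Ja /Jb !scale_mkJ !add_mkJ /rho /= rho_mkJ scale_mkJ.
  by congr mkJ; field; rewrite four_neq0 zeta_neq0 two_neq0.
- apply: (eigen_scaled); rewrite /t; apply: (eigen_scaled).
  rewrite ab_eq /mu /nu /Ja /Jb !scale_mkJ !add_mkJ /rho /= rho_mkJ scale_mkJ.
  by congr mkJ; field; rewrite four_neq0 zeta_neq0 two_neq0.
- move=> k; rewrite -[RHS]scale1r; move: k.
  apply: (eigen_scaled); rewrite /one; apply: (eigen_scaled).
  by rewrite /Jsigma /rho /= rho_mkJ scale_mkJ; congr mkJ; ring.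
Qed.
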